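(* Let $f:X\to Y$ and $g:X'\to Y'$ be morphisms in $\mathcal{C}_{\mathcal{I}}^J(\mathcal{P}(\Lambda))$ such that $f$ is isomorphic to $g$ in $\mathcal{K}_{\mathcal{I}}^J(\mathcal{P}(\Lambda))$, i.e. there are isomorphisms $\alpha:X\to X'$ and $\beta:Y\to Y'$ in $\mathcal{K}_{\mathcal{I}}^J(\mathcal{P}(\Lambda))$ with $[g]\alpha=\beta[f]$. Then: (a) if $f$ is smonic, then $g$ is smonic; (b) if $f$ is sepic, then $g$ is sepic; (c) if $f$ and $g$ are irreducible and $f$ is sirreducible, then $g$ is sirreducible.
   Context: $\Lambda$ is a finite-dimensional non-semisimple algebra over a field $k$, $\mathcal{P}(\Lambda)$ the category of finitely generated projective right $\Lambda$-modules; $\mathcal{I}$ is the ideal of radical morphisms (those whose image lies in the radical of the target). For an interval $J\subseteq\mathbb{Z}$, $\mathcal{C}_{\mathcal{I}}^J(\mathcal{P}(\Lambda))$ is the category of cochain complexes of finitely generated projective $\Lambda$-modules vanishing outside $J$ with radical differentials, and $\mathcal{K}_{\mathcal{I}}^J(\mathcal{P}(\Lambda))$ its homotopy category; $[f]$ denotes the homotopy class of $f$. A morphism of complexes $f=(f^n)$ is smonic if all $f^n$ are split monomorphisms, sepic if all $f^n$ are split epimorphisms, and sirreducible if there is exactly one index $i_0$ with $f^{i_0}$ irreducible in $\mathcal{P}(\Lambda)$, $f^n$ a split epimorphism for $n<i_0$ and a split monomorphism for $n>i_0$. *)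

From HB Require Import structures.
From mathcomp Require Import all_boot all_order all_algebra all_field.
Set Implicit Arguments. Unset Strict Implicit. Unset Printing Implicit Defensive.
Import Order.TTheory GRing.Theory Num.Theory.
Local Open Scope ring_scope.

(* A finitely generated right A-module of k-dimension m is encoded by row
   vectors 'rV[k]_m with right action  v . a := v *m rho a. *)

Section Modules.
Variables (k : fieldType) (A : falgType k).

Definition is_rmod (m : nat) (rho : A -> 'M[k]_m) : Prop :=
  [/\ forall a b, rho (a + b) = rho a + rho b,
      forall (c : k) a, rho (c *: a) = c *: rho a,
      rho 1 = 1%:M &
      forall a b, rho (a * b) = rho a *m rho b].

Definition is_hom m n (rM : A -> 'M[k]_m) (rN : A -> 'M[k]_n)
  (F : 'M[k]_(m, n)) : Prop := forall a, rM a *m F = F *m rN a.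

Definition is_projective m (rP : A -> 'M[k]_m) : Prop :=
  forall n n' (rN : A -> 'M[k]_n) (rN' : A -> 'M[k]_n')
         (p : 'M[k]_(n, n')) (h : 'M[k]_(m, n')),
    is_rmod rN -> is_rmod rN' -> is_hom rN rN' p -> row_full p ->
    is_hom rP rN' h ->
    exists l : 'M[k]_(m, n), is_hom rP rN l /\ l *m p = h.

(* submodule = row space of U stable under the action *)
Definition is_submod n (rN : A -> 'M[k]_n) (U : 'M[k]_n) : Prop :=
  forall a, (U *m rN a <= U)%MS.

(* semisimple algebra: every (f.g.) module is semisimple, i.e. every
   submodule has a complementary submodule *)
Definition semisimple_alg : Prop :=
  forall m (rM : A -> 'M[k]_m), is_rmod rM ->
  forall U : 'M[k]_m, is_submod rM U ->
  exists V : 'M[k]_m, is_submod rM V /\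
    (U + V == 1%:M)%MS /\ (U :&: V == (0 : 'M[k]_m))%MS.

Definition maximal_submod n (rN : A -> 'M[k]_n) (U : 'M[k]_n) : Prop :=
  [/\ is_submod rN U, ~~ (1%:M <= U)%MS &
      forall V : 'M[k]_n, is_submod rN V -> (U <= V)%MS ->
        (V == U)%MS \/ (1%:M <= V)%MS].

(* radical morphism: image contained in rad N = intersection of the maximal
   submodules of N *)
Definition radical_hom m n (rN : A -> 'M[k]_n) (F : 'M[k]_(m, n)) : Prop :=
  forall U : 'M[k]_n, maximal_submod rN U -> (F <= U)%MS.

Definition split_mono m n (rM : A -> 'M[k]_m) (rN : A -> 'M[k]_n)
  (F : 'M[k]_(m, n)) : Prop :=
  exists R : 'M[k]_(n, m), is_hom rN rM R /\ F *m R = 1%:M.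

Definition split_epi m n (rM : A -> 'M[k]_m) (rN : A -> 'M[k]_n)
  (F : 'M[k]_(m, n)) : Prop :=
  exists S : 'M[k]_(n, m), is_hom rN rM S /\ S *m F = 1%:M.

Definition irreducible_P m n (rM : A -> 'M[k]_m) (rN : A -> 'M[k]_n)
  (F : 'M[k]_(m, n)) : Prop :=
  [/\ is_hom rM rN F, ~ split_mono rM rN F, ~ split_epi rM rN F &
      forall p (rZ : A -> 'M[k]_p) (G : 'M[k]_(m, p)) (H : 'M[k]_(p, n)),
        is_rmod rZ -> is_projective rZ -> is_hom rM rZ G -> is_hom rZ rN H ->
        F = G *m H -> split_mono rM rZ G \/ split_epi rZ rN H].

Definition is_interval (J : pred int) : Prop :=
  forall a b c : int, a \in J -> c \in J -> a <= b -> b <= c -> b \in J.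

(* objects of C_I^J(P(A)): cochain complexes of f.g. projectives vanishing
   outside J, with radical differentials *)
Record cplx (J : pred int) := Cplx {
  cdim : int -> nat;
  cact : forall n : int, A -> 'M[k]_(cdim n);
  cd : forall n : int, 'M[k]_(cdim n, cdim (n + 1));
  cact_rmod : forall n, is_rmod (cact n);
  cact_proj : forall n, is_projective (cact n);
  cvanish : forall n, n \notin J -> cdim n = 0%N;
  cd_hom : forall n, is_hom (cact n) (cact (n + 1)) (cd n);
  cd_rad : forall n, radical_hom (cact (n + 1)) (cd n);
  cdd : forall n, cd n *m cd (n + 1) = 0
}.

Definition cmor J (X Y : cplx J) := forall n : int, 'M[k]_(cdim X n, cdim Y n).

Definition chain_map J (X Y : cplx J) (f : cmor X Y) : Prop :=
  (forall n, is_hom (cact X n) (cact Y n) (f n)) /\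
  (forall n, cd X n *m f (n + 1) = f n *m cd Y n).

Definition ccomp J (X Y Z : cplx J) (f : cmor X Y) (g : cmor Y Z) : cmor X Z :=
  fun n => f n *m g n.

Definition cid J (X : cplx J) : cmor X X := fun n => 1%:M.

(* f - g = d s + s d, with s^n : X^(n+1) -> Y^n (written at degree n+1) *)
Definition homotopic J (X Y : cplx J) (f g : cmor X Y) : Prop :=
  exists s : forall n : int, 'M[k]_(cdim X (n + 1), cdim Y n),
    (forall n, is_hom (cact X (n + 1)) (cact Y n) (s n)) /\
    (forall n, f (n + 1) - g (n + 1) = cd X (n + 1) *m s (n + 1) + s n *m cd Y n).

(* f is (the representative of) an isomorphism in K_I^J(P(A)) *)
Definition iso_K J (X Y : cplx J) (f : cmor X Y) : Prop :=
  chain_map f /\ exists f' : cmor Y X, chain_map f' /\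
    homotopic (ccomp f f') (cid X) /\ homotopic (ccomp f' f) (cid Y).

Definition smonic J (X Y : cplx J) (f : cmor X Y) : Prop :=
  forall n, split_mono (cact X n) (cact Y n) (f n).

Definition sepic J (X Y : cplx J) (f : cmor X Y) : Prop :=
  forall n, split_epi (cact X n) (cact Y n) (f n).

Definition split_mono_C J (X Y : cplx J) (f : cmor X Y) : Prop :=
  exists r : cmor Y X, chain_map r /\ forall n, f n *m r n = 1%:M.

Definition split_epi_C J (X Y : cplx J) (f : cmor X Y) : Prop :=
  exists s : cmor Y X, chain_map s /\ forall n, s n *m f n = 1%:M.

Definition irreducible_C J (X Y : cplx J) (f : cmor X Y) : Prop :=
  [/\ chain_map f, ~ split_mono_C f, ~ split_epi_C f &
      forall (Z : cplx J) (u : cmor X Z) (v : cmor Z Y),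
        chain_map u -> chain_map v -> (forall n, f n = u n *m v n) ->
        split_mono_C u \/ split_epi_C v].

Definition sirreducible J (X Y : cplx J) (f : cmor X Y) : Prop :=
  exists i0 : int,
    [/\ forall n, irreducible_P (cact X n) (cact Y n) (f n) <-> n = i0,
        forall n, n < i0 -> split_epi (cact X n) (cact Y n) (f n) &
        forall n, i0 < n -> split_mono (cact X n) (cact Y n) (f n)].

End Modules.

(* Homotopic chain maps differ degreewise by radical morphisms, because the
   differentials are radical; and 1 + r is invertible for a radical
   endomorphism r, since its image lies in no maximal submodule.  Hence
   homotopy equivalences are degreewise isomorphisms, and g^n is f^n up to
   these isomorphisms plus a radical morphism.  Split monomorphisms and split
   epimorphisms survive such perturbations.  At the degree i0 where f is
   irreducible, a factorization g^i0 = G H through a projective Z is spliced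
   into a complex equal to X' below i0, to Z at i0 and to Y' above i0, through
   which g factors in C; irreducibility of g in C then splits G or H. *)

From HB Require Import structures.
From mathcomp Require Import all_boot all_order all_algebra all_field.
From Stdlib Require Import Classical.
From mathcomp Require Import zify.
Set Implicit Arguments. Unset Strict Implicit. Unset Printing Implicit Defensive.
Import Order.TTheory GRing.Theory.
Local Open Scope ring_scope.

Section FalgModules.
Variables (k : fieldType) (A : falgType k).

Lemma is_hom_mul m n p (rM : A -> 'M[k]_m) (rN : A -> 'M[k]_n) (rP : A -> 'M[k]_p)
    (F : 'M_(m, n)) (G : 'M_(n, p)) :
  is_hom rM rN F -> is_hom rN rP G -> is_hom rM rP (F *m G).
Proof. by move=> hF hG a; rewrite mulmxA hF -!mulmxA hG. Qed.

Lemma is_homD m n (rM : A -> 'M[k]_m) (rN : A -> 'M[k]_n) (F G : 'M_(m, n)) :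
  is_hom rM rN F -> is_hom rM rN G -> is_hom rM rN (F + G).
Proof. by move=> hF hG a; rewrite mulmxDr mulmxDl hF hG. Qed.

Lemma is_homN m n (rM : A -> 'M[k]_m) (rN : A -> 'M[k]_n) (F : 'M_(m, n)) :
  is_hom rM rN F -> is_hom rM rN (- F).
Proof. by move=> hF a; rewrite mulmxN mulNmx hF. Qed.

Lemma is_homB m n (rM : A -> 'M[k]_m) (rN : A -> 'M[k]_n) (F G : 'M_(m, n)) :
  is_hom rM rN F -> is_hom rM rN G -> is_hom rM rN (F - G).
Proof. by move=> hF hG; apply: is_homD => //; apply: is_homN. Qed.

Lemma is_hom1 m (rM : A -> 'M[k]_m) : is_hom rM rM 1%:M.
Proof. by move=> a; rewrite mulmx1 mul1mx. Qed.

Lemma is_hom_invmx m (rM : A -> 'M[k]_m) (u : 'M_m) :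
  u \in unitmx -> is_hom rM rM u -> is_hom rM rM (invmx u).
Proof.
move=> uu hu a; apply: (canLR (mulmxK uu)).
by rewrite -mulmxA hu mulmxA mulVmx // mul1mx.
Qed.

Lemma radical_hom_mull m n p (rP : A -> 'M[k]_p) (L : 'M_(m, n)) (F : 'M_(n, p)) :
  radical_hom rP F -> radical_hom rP (L *m F).
Proof. by move=> hF U /hF; apply: submx_trans (submxMl _ _). Qed.

Lemma radical_homD m p (rP : A -> 'M[k]_p) (F G : 'M_(m, p)) :
  radical_hom rP F -> radical_hom rP G -> radical_hom rP (F + G).
Proof. by move=> hF hG U hU; rewrite addmx_sub ?hF ?hG. Qed.

Lemma radical_homN m p (rP : A -> 'M[k]_p) (F : 'M_(m, p)) :
  radical_hom rP F -> radical_hom rP (- F).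
Proof. by move=> hF U hU; rewrite eqmx_opp hF. Qed.

Definition preimg_mx n p (G : 'M[k]_(n, p)) (U : 'M[k]_p) := kermx (G *m cokermx U).

Lemma sub_preimg_mx m n p (G : 'M[k]_(n, p)) (U : 'M_p) (B : 'M_(m, n)) :
  (B <= preimg_mx G U)%MS = (B *m G <= U)%MS.
Proof. by rewrite sub_kermx submxE mulmxA. Qed.

Section Preimage.
Variables (n p : nat) (rN : A -> 'M[k]_n) (rP : A -> 'M[k]_p) (G : 'M[k]_(n, p)).
Hypothesis hG : is_hom rN rP G.

Lemma preimg_submod U : is_submod rP U -> is_submod rN (preimg_mx G U).
Proof.
move=> sU a; rewrite sub_preimg_mx -mulmxA hG mulmxA.
by apply: submx_trans (sU a); rewrite submxMr // -sub_preimg_mx.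
Qed.

Lemma preimg_maximal U : maximal_submod rP U -> ~~ (1%:M <= preimg_mx G U)%MS ->
  maximal_submod rN (preimg_mx G U).
Proof.
move=> [sU nU maxU] nV; split=> [||W sW VW] //; first exact: preimg_submod.
have sWGU : is_submod rP (W *m G + U)%MS.
  move=> a; rewrite addsmxMr addsmxS ?sU // -mulmxA -hG mulmxA submxMr ?sW //.
case: (maxU _ sWGU (addsmxSr (W *m G) U)) => [WGU_U | full].
  left; apply/andP; split=> //; rewrite sub_preimg_mx.
  by case/andP: WGU_U => + _; apply: submx_trans; rewrite addsmxSl.
have /sub_addsmxP[u eG] := submx_trans (submx1 G) full; right.
have lift1 : (1%:M - u.1 *m W <= preimg_mx G U)%MS.
  by rewrite sub_preimg_mx mulmxBl mul1mx {1}eG addrAC mulmxA subrr add0r submxMl.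
rewrite -(subrK (u.1 *m W) 1%:M) addmx_sub ?submxMl //.
exact: submx_trans lift1 VW.
Qed.

End Preimage.

Lemma radical_hom_mulr m n p (rN : A -> 'M[k]_n) (rP : A -> 'M[k]_p)
    (F : 'M_(m, n)) (G : 'M_(n, p)) :
  is_hom rN rP G -> radical_hom rN F -> radical_hom rP (F *m G).
Proof.
move=> hG hF U maxU; rewrite -sub_preimg_mx.
have [full | notfull] := boolP (1%:M <= preimg_mx G U)%MS.
  exact: submx_trans (submx1 F) full.
exact/hF/preimg_maximal.
Qed.

Lemma submod_sub_maximal m (rM : A -> 'M[k]_m) (W : 'M_m) :
  is_submod rM W -> ~~ (1%:M <= W)%MS -> exists2 U, maximal_submod rM U & (W <= U)%MS.
Proof.
have [c] := ubnP (m - \rank W); elim: c W => // c IH W ltWc sW nW.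
have [[V [sV ltWV nV]] | noV] := classic (exists V,
    [/\ is_submod rM V, (W < V)%MS & ~~ (1%:M <= V)%MS]).
  have [|U maxU VU] := IH V _ sV nV.
    by move: ltWV (rank_leq_col V); rewrite ltmxErank => /andP[_]; lia.
  by exists U => //; apply: submx_trans VU; apply: ltmxW.
exists W => //; split=> // V sV WV.
have [VW | /negP nVW] := boolP (V <= W)%MS; first by left; apply/andP.
have [| nV] := boolP (1%:M <= V)%MS; [by right | exfalso].
by apply: noV; exists V; split; rewrite // ltmxE WV; apply/negP.
Qed.

Lemma unitmx_1D_radical m (rM : A -> 'M[k]_m) (r : 'M_m) :
  is_hom rM rM r -> radical_hom rM r -> (1%:M + r) \in unitmx.
Proof.
move=> hr rr; rewrite -row_full_unit -sub1mx; apply/negPn/negP => notfull.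
have hu : is_hom rM rM (1%:M + r) by apply: is_homD (is_hom1 _) hr.
have su : is_submod rM (1%:M + r) by move=> a; rewrite -hu submxMl.
have [U maxU uU] := submod_sub_maximal su notfull.
case: (maxU) => _ /negP nU _; apply: nU.
by rewrite -(addrK r 1%:M) addmx_sub // eqmx_opp rr.
Qed.

Lemma split_mono_mul m n p (rM : A -> 'M[k]_m) (rN : A -> 'M[k]_n)
    (rP : A -> 'M[k]_p) (F : 'M_(m, n)) (G : 'M_(n, p)) :
  split_mono rM rN F -> split_mono rN rP G -> split_mono rM rP (F *m G).
Proof.
move=> [R [hR FR]] [S [hS GS]]; exists (S *m R); split; first exact: is_hom_mul hS hR.
by rewrite mulmxA -(mulmxA F) GS mulmx1 FR.
Qed.

Lemma split_epi_mul m n p (rM : A -> 'M[k]_m) (rN : A -> 'M[k]_n)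
    (rP : A -> 'M[k]_p) (F : 'M_(m, n)) (G : 'M_(n, p)) :
  split_epi rM rN F -> split_epi rN rP G -> split_epi rM rP (F *m G).
Proof.
move=> [S [hS SF]] [T [hT TG]]; exists (T *m S); split; first exact: is_hom_mul hT hS.
by rewrite mulmxA -(mulmxA T) SF mulmx1 TG.
Qed.

Lemma split_monoD_radical m n (rM : A -> 'M[k]_m) (rN : A -> 'M[k]_n) (F E : 'M_(m, n)) :
  split_mono rM rN F -> is_hom rM rN E -> radical_hom rN E -> split_mono rM rN (F + E).
Proof.
move=> [R [hR FR]] hE rE.
have hER := is_hom_mul hE hR.
have uER := unitmx_1D_radical hER (radical_hom_mulr hR rE).
exists (R *m invmx (1%:M + E *m R)); split.
  exact/(is_hom_mul hR)/is_hom_invmx/is_homD/hER/is_hom1.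
by rewrite mulmxA mulmxDl FR mulmxV.
Qed.

Lemma split_epiD_radical m n (rM : A -> 'M[k]_m) (rN : A -> 'M[k]_n) (F E : 'M_(m, n)) :
  split_epi rM rN F -> is_hom rM rN E -> radical_hom rN E -> split_epi rM rN (F + E).
Proof.
move=> [S [hS SF]] hE rE.
have hSE := is_hom_mul hS hE.
have uSE := unitmx_1D_radical hSE (radical_hom_mull S rE).
exists (invmx (1%:M + S *m E) *m S); split.
  exact/is_hom_mul/hS/is_hom_invmx/is_homD/hSE/is_hom1.
by rewrite -mulmxA mulmxDr SF mulVmx.
Qed.

Section RadicalConjugacy.
Variables (m m' n n' : nat) (rM : A -> 'M[k]_m) (rM' : A -> 'M[k]_m')
  (rN : A -> 'M[k]_n) (rN' : A -> 'M[k]_n').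
Variables (a : 'M[k]_(m, m')) (ai : 'M[k]_(m', m)) (b : 'M[k]_(n, n'))
  (bi : 'M[k]_(n', n)) (F : 'M[k]_(m, n)) (F' : 'M[k]_(m', n')).
Hypotheses (ha : is_hom rM rM' a) (hai : is_hom rM' rM ai)
  (aai : a *m ai = 1%:M) (aia : ai *m a = 1%:M)
  (hb : is_hom rN rN' b) (hbi : is_hom rN' rN bi)
  (bbi : b *m bi = 1%:M) (bib : bi *m b = 1%:M)
  (hF : is_hom rM rN F) (hF' : is_hom rM' rN' F')
  (rad : radical_hom rN' (a *m F' - F *m b)).

Let E := a *m F' - F *m b.
Let E' := ai *m F - F' *m bi.

Let hE : is_hom rM rN' E.
Proof. exact: is_homB (is_hom_mul ha hF') (is_hom_mul hF hb). Qed.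

Let hE' : is_hom rM' rN E'.
Proof. exact: is_homB (is_hom_mul hai hF) (is_hom_mul hF' hbi). Qed.

Let radE' : radical_hom rN E'.
Proof.
have -> : E' = - (ai *m E *m bi).
  by rewrite /E /E' mulmxBr mulmxBl opprB !mulmxA aia mul1mx -!mulmxA bbi mulmx1.
exact/radical_homN/(radical_hom_mulr hbi)/radical_hom_mull.
Qed.

Let F'_def : F' = ai *m (F *m b + E).
Proof. by rewrite /E addrC subrK mulmxA aia mul1mx. Qed.

Let F_def : F = a *m (F' *m bi + E').
Proof. by rewrite /E' addrC subrK mulmxA aai mul1mx. Qed.

Lemma split_mono_radical_conj : split_mono rM rN F <-> split_mono rM' rN' F'.
Proof.
split=> sF; [rewrite F'_def | rewrite F_def].
  apply: (split_mono_mul (rN := rM)); first by exists a.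
  by apply: split_monoD_radical => //; apply: split_mono_mul sF _; exists bi.
apply: (split_mono_mul (rN := rM')); first by exists ai.
by apply: split_monoD_radical => //; apply: split_mono_mul sF _; exists b.
Qed.

Lemma split_epi_radical_conj : split_epi rM rN F <-> split_epi rM' rN' F'.
Proof.
split=> sF; [rewrite F'_def | rewrite F_def].
  apply: (split_epi_mul (rN := rM)); first by exists a.
  by apply: split_epiD_radical => //; apply: split_epi_mul sF _; exists bi.
apply: (split_epi_mul (rN := rM')); first by exists ai.
by apply: split_epiD_radical => //; apply: split_epi_mul sF _; exists b.
Qed.

End RadicalConjugacy.

Section Complexes.
Variable J : pred int.

Lemma homotopic_radical (X Y : cplx A J) (F G : cmor X Y) n :
  homotopic F G -> radical_hom (cact Y n) (F n - G n).
Proof.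
move=> [s [hs FG]]; rewrite -(subrK 1 n) FG.
apply: radical_homD; last exact/radical_hom_mull/cd_rad.
by apply: radical_hom_mulr (hs _) _; apply: cd_rad.
Qed.

Lemma iso_K_invertible (X Y : cplx A J) (a : cmor X Y) : iso_K a -> forall n,
  exists2 b : 'M_(cdim Y n, cdim X n), is_hom (cact Y n) (cact X n) b &
    a n *m b = 1%:M /\ b *m a n = 1%:M.
Proof.
move=> [[ha _] [a' [[ha' _] [aa' a'a]]]] n.
have unit_near1 m (rP : A -> 'M[k]_m) (u : 'M_m) : is_hom rP rP u ->
    radical_hom rP (u - 1%:M) -> u \in unitmx.
  move=> hu ru; rewrite -(subrK 1%:M u) addrC.
  exact/unitmx_1D_radical/ru/is_homB/is_hom1.
have u_aa' : a n *m a' n \in unitmx.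
  by apply: unit_near1 (homotopic_radical aa'); apply: is_hom_mul.
have u_a'a : a' n *m a n \in unitmx.
  by apply: unit_near1 (homotopic_radical a'a); apply: is_hom_mul.
set b := a' n *m invmx (a n *m a' n).
have a'ab : a' n *m a n *m b = a' n.
  by rewrite -!mulmxA (mulmxA (a n)) mulmxV // mulmx1.
exists b; first exact/(is_hom_mul (ha' n))/is_hom_invmx/is_hom_mul/ha'/ha.
split; first by rewrite mulmxA mulmxV.
by rewrite -(mulKmx u_a'a b) a'ab -mulmxA mulVmx.
Qed.

Lemma split_mono_notin (X Y : cplx A J) (f : cmor X Y) n :
  n \notin J -> split_mono (cact X n) (cact Y n) (f n).
Proof.
move=> nJ; exists 0; split; first by move=> a; rewrite mulmx0 mul0mx.
move: (f n *m 0) (1%:M : 'M_(cdim X n)); rewrite (cvanish X nJ) => M N.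
by rewrite !thinmx0.
Qed.

End Complexes.

(* [pid_mx m : 'M_(m, n)] is the identity when m = n; it retypes matrices
   along dimension equalities that do not hold by conversion. *)
Definition idmx m n : 'M[k]_(m, n) := pid_mx m.

Lemma idmx_id m : idmx m m = 1%:M.
Proof. exact: pid_mx_1. Qed.

Lemma idmxK m n : m = n -> idmx m n *m idmx n m = 1%:M.
Proof. by move=> ->; rewrite idmx_id mulmx1. Qed.

Definition retype m' m (rP : A -> 'M[k]_m) : A -> 'M[k]_m' :=
  fun a => idmx m' m *m rP a *m idmx m m'.

Lemma retype_hom m' m (rP : A -> 'M[k]_m) : m' = m ->
  is_hom rP (retype m' rP) (idmx m m') /\ is_hom (retype m' rP) rP (idmx m' m).
Proof. by move=> ->; rewrite /retype idmx_id; split=> a; rewrite !(mulmx1, mul1mx). Qed.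

Lemma retype_rmod m' m (rP : A -> 'M[k]_m) : m' = m -> is_rmod rP -> is_rmod (retype m' rP).
Proof.
move=> -> [hD hZ h1 hM]; rewrite /retype idmx_id.
by split=> *; rewrite !(mulmx1, mul1mx) ?hD ?hZ ?h1 ?hM.
Qed.

Lemma retype_proj m' m (rP : A -> 'M[k]_m) : m' = m ->
  is_projective rP -> is_projective (retype m' rP).
Proof.
move=> -> hP n n' rN rN' q h hN hN' hq fq hh.
have [|l [hl lq]] := hP n n' rN rN' q h hN hN' hq fq.
  by move=> a; rewrite -hh /retype idmx_id mul1mx mulmx1.
by exists l; split=> // a; rewrite /retype idmx_id mul1mx mulmx1 hl.
Qed.

(* W is X below i0, Z at i0 and Y above i0, with differentials d_X G into and
   H d_Y out of Z; g factors through W as uW followed by vW.  The dimension of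
   W^n agrees with that of X^n, Z or Y^n only propositionally, whence [idmx]. *)
Section Splice.
Variables (J : pred int) (X Y : cplx A J) (g : cmor X Y) (i0 : int) (p : nat)
  (rZ : A -> 'M[k]_p) (G : 'M[k]_(cdim X i0, p)) (H : 'M[k]_(p, cdim Y i0)).
Hypotheses (hg : chain_map g) (Ji0 : i0 \in J) (rZm : is_rmod rZ) (rZp : is_projective rZ)
  (hG : is_hom (cact X i0) rZ G) (hH : is_hom rZ (cact Y i0) H) (gGH : g i0 = G *m H).

Definition dimW n := if n < i0 then cdim X n else if n == i0 then p else cdim Y n.

Definition actW n : A -> 'M[k]_(dimW n) :=
  if n < i0 then retype (dimW n) (cact X n)
  else if n == i0 then retype (dimW n) rZ else retype (dimW n) (cact Y n).

Definition uW_inv n : 'M[k]_(dimW n, cdim X n) := idmx (dimW n) (cdim X n).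
Definition vW_inv n : 'M[k]_(cdim Y n, dimW n) := idmx (cdim Y n) (dimW n).

Definition uW n : 'M[k]_(cdim X n, dimW n) :=
  if n < i0 then idmx (cdim X n) (dimW n)
  else if n == i0 then idmx (cdim X n) (cdim X i0) *m G *m idmx p (dimW n)
  else g n *m vW_inv n.

Definition vW n : 'M[k]_(dimW n, cdim Y n) :=
  if n < i0 then uW_inv n *m g n
  else if n == i0 then idmx (dimW n) p *m H *m idmx (cdim Y i0) (cdim Y n)
  else idmx (dimW n) (cdim Y n).

Definition dW n : 'M[k]_(dimW n, dimW (n + 1)) :=
  if n < i0 then uW_inv n *m cd X n *m uW (n + 1)
  else vW n *m cd Y n *m vW_inv (n + 1).

Lemma dimW_lt n : n < i0 -> dimW n = cdim X n.
Proof. by rewrite /dimW => ->. Qed.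

Lemma dimW_i0 : dimW i0 = p.
Proof. by rewrite /dimW ltxx eqxx. Qed.

Lemma dimW_gt n : i0 < n -> dimW n = cdim Y n.
Proof. by move=> gt; rewrite /dimW lt_gtF // gt_eqF. Qed.

Lemma actW_i0 : actW i0 = retype (dimW i0) rZ.
Proof. by rewrite /actW ltxx eqxx. Qed.

Lemma uW_i0 : uW i0 = G *m idmx p (dimW i0).
Proof. by rewrite /uW ltxx eqxx idmx_id mul1mx. Qed.

Lemma vW_i0 : vW i0 = idmx (dimW i0) p *m H.
Proof. by rewrite /vW ltxx eqxx idmx_id mulmx1. Qed.

Lemma uW_gt n : i0 < n -> uW n = g n *m vW_inv n.
Proof. by move=> gt; rewrite /uW lt_gtF // gt_eqF. Qed.

Lemma vW_lt n : n < i0 -> vW n = uW_inv n *m g n.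
Proof. by rewrite /vW => ->. Qed.

Lemma uW_invK n : n < i0 -> uW n *m uW_inv n = 1%:M.
Proof. by move=> lt; rewrite /uW lt idmxK // dimW_lt. Qed.

Lemma vW_invK n : i0 < n -> vW_inv n *m vW n = 1%:M.
Proof. by move=> gt; rewrite /vW lt_gtF // gt_eqF // idmxK // dimW_gt. Qed.

Lemma uWvW n : uW n *m vW n = g n.
Proof.
rewrite /uW /vW; case: ltgtP => [lt | gt | ->].
- by rewrite mulmxA idmxK ?mul1mx // dimW_lt.
- by rewrite -mulmxA idmxK ?mulmx1 // dimW_gt.
by rewrite !idmx_id mul1mx mulmx1 mulmxA -(mulmxA G) idmxK ?dimW_i0 // mulmx1 gGH.
Qed.

Lemma uW_inv_hom n : n < i0 -> is_hom (actW n) (cact X n) (uW_inv n).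
Proof. by move=> lt; rewrite /actW lt; apply: (retype_hom _ (dimW_lt lt)).2. Qed.

Lemma vW_inv_hom n : i0 < n -> is_hom (cact Y n) (actW n) (vW_inv n).
Proof. by move=> gt; rewrite /actW lt_gtF // gt_eqF //; apply: (retype_hom _ (dimW_gt gt)).1. Qed.

Lemma uW_hom n : is_hom (cact X n) (actW n) (uW n).
Proof.
rewrite /uW /actW; case: ltgtP => [lt | gt | ->].
- exact: (retype_hom _ (dimW_lt lt)).1.
- exact: is_hom_mul (hg.1 n) (retype_hom _ (dimW_gt gt)).1.
by rewrite idmx_id mul1mx; apply: is_hom_mul hG (retype_hom _ dimW_i0).1.
Qed.

Lemma vW_hom n : is_hom (actW n) (cact Y n) (vW n).
Proof.
rewrite /vW /actW; case: ltgtP => [lt | gt | ->].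
- exact: is_hom_mul (retype_hom _ (dimW_lt lt)).2 (hg.1 n).
- exact: (retype_hom _ (dimW_gt gt)).2.
by rewrite idmx_id mulmx1; apply: is_hom_mul (retype_hom _ dimW_i0).2 hH.
Qed.

Lemma actW_rmod n : is_rmod (actW n).
Proof.
rewrite /actW; case: ltgtP => [lt | gt | ->].
- exact: retype_rmod (dimW_lt lt) (cact_rmod X n).
- exact: retype_rmod (dimW_gt gt) (cact_rmod Y n).
exact: retype_rmod dimW_i0 rZm.
Qed.

Lemma actW_proj n : is_projective (actW n).
Proof.
rewrite /actW; case: ltgtP => [lt | gt | ->].
- exact/(retype_proj (dimW_lt lt))/cact_proj.
- exact/(retype_proj (dimW_gt gt))/cact_proj.
exact: retype_proj dimW_i0 rZp.
Qed.

Lemma wd_vanish n : n \notin J -> dimW n = 0%N.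
Proof.
move=> nJ; rewrite /dimW; case: ltgtP => [_ | _ | e]; rewrite ?cvanish //.
by rewrite e Ji0 in nJ.
Qed.

Lemma dW_hom n : is_hom (actW n) (actW (n + 1)) (dW n).
Proof.
rewrite /dW; case: ltP => [lt | ge].
  exact: is_hom_mul (is_hom_mul (uW_inv_hom lt) (cd_hom X n)) (uW_hom _).
apply: is_hom_mul (is_hom_mul (vW_hom n) (cd_hom Y n)) (vW_inv_hom _).
by rewrite ltzD1.
Qed.

Lemma dW_rad n : radical_hom (actW (n + 1)) (dW n).
Proof.
rewrite /dW; case: ltP => [lt | ge].
  by apply: radical_hom_mulr (uW_hom _) _; apply/radical_hom_mull/cd_rad.
apply: radical_hom_mulr; last exact/radical_hom_mull/cd_rad.
by apply: vW_inv_hom; rewrite ltzD1.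
Qed.

Lemma dW_dd n : dW n *m dW (n + 1) = 0.
Proof.
rewrite /dW; case: (ltP n i0) => n_i0; case: (ltP (n + 1) i0) => n1_i0.
- rewrite !mulmxA -(mulmxA _ (uW _)) uW_invK // mulmx1.
  by rewrite -(mulmxA _ (cd X n)) cdd mulmx0 mul0mx.
- rewrite !mulmxA -(mulmxA _ (uW _)) uWvW -(mulmxA _ (cd X n)) (proj2 hg n).
  by rewrite -(mulmxA (uW_inv n)) -(mulmxA (g n)) cdd mulmx0 mulmx0 mul0mx.
- by move: n_i0 n1_i0; lia.
rewrite !mulmxA -(mulmxA _ (vW_inv _)) vW_invK ?ltzD1 // mulmx1.
by rewrite -(mulmxA _ (cd Y n)) cdd mulmx0 mul0mx.
Qed.

Definition W : cplx A J :=
  @Cplx k A J dimW actW dW actW_rmod actW_proj wd_vanish dW_hom dW_rad dW_dd.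

Lemma uW_chain : chain_map (Y := W) uW.
Proof.
split=> [|n /=]; first exact: uW_hom.
rewrite /dW; case: ltP => [lt | ge]; first by rewrite !mulmxA uW_invK // mul1mx.
by rewrite !mulmxA uWvW -(proj2 hg n) uW_gt ?ltzD1 // mulmxA.
Qed.

Lemma vW_chain : chain_map (X := W) vW.
Proof.
split=> [|n /=]; first exact: vW_hom.
rewrite /dW; case: ltP => [lt | ge].
  by rewrite -mulmxA uWvW -mulmxA (proj2 hg n) mulmxA vW_lt.
by rewrite -mulmxA vW_invK ?ltzD1 // mulmx1.
Qed.

Lemma irreducible_C_factor :
  irreducible_C g -> split_mono (cact X i0) rZ G \/ split_epi rZ (cact Y i0) H.
Proof.
have hiZ := retype_hom rZ dimW_i0.
case=> _ _ _ /(_ W uW vW uW_chain vW_chain (fun n => esym (uWvW n))).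
case=> [[r [[hr _] ur]] | [s [[hs _] sv]]].
  left; exists (idmx p (dimW i0) *m r i0); split.
    by apply: is_hom_mul (hr i0); rewrite /= actW_i0; apply: hiZ.1.
  by have := ur i0; rewrite uW_i0 -mulmxA.
right; exists (s i0 *m idmx (dimW i0) p); split.
  by apply: is_hom_mul (hs i0) _; rewrite /= actW_i0; apply: hiZ.2.
by have := sv i0; rewrite vW_i0 !mulmxA.
Qed.

End Splice.

Lemma irreducible_C_irreducible_P (J : pred int) (X Y : cplx A J) (g : cmor X Y) i0 :
  chain_map g -> irreducible_C g -> i0 \in J ->
  ~ split_mono (cact X i0) (cact Y i0) (g i0) -> ~ split_epi (cact X i0) (cact Y i0) (g i0) ->
  irreducible_P (cact X i0) (cact Y i0) (g i0).
Proof.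
move=> hg irr Ji0 nsm nse; split=> // [|p rZ G H rZm rZp hG hH gGH]; first exact: hg.1.
exact: irreducible_C_factor hg Ji0 rZm rZp hG hH gGH irr.
Qed.

Section HomotopyEquivalentMaps.
Variables (J : pred int) (X Y X' Y' : cplx A J) (f : cmor X Y) (g : cmor X' Y')
  (alpha : cmor X X') (beta : cmor Y Y').
Hypotheses (hf : chain_map f) (hg : chain_map g)
  (halpha : iso_K alpha) (hbeta : iso_K beta)
  (hcomm : homotopic (ccomp alpha g) (ccomp f beta)).

Lemma split_mono_homotopy n :
  split_mono (cact X n) (cact Y n) (f n) <-> split_mono (cact X' n) (cact Y' n) (g n).
Proof.
have [ai hai [aai aia]] := iso_K_invertible halpha n.
have [bi hbi [bbi bib]] := iso_K_invertible hbeta n.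
apply: (split_mono_radical_conj (a := alpha n) (b := beta n)) => //;
  by [apply: halpha.1.1 | apply: hbeta.1.1 | apply: hf.1 | apply: hg.1
     | apply: homotopic_radical hcomm].
Qed.

Lemma split_epi_homotopy n :
  split_epi (cact X n) (cact Y n) (f n) <-> split_epi (cact X' n) (cact Y' n) (g n).
Proof.
have [ai hai [aai aia]] := iso_K_invertible halpha n.
have [bi hbi [bbi bib]] := iso_K_invertible hbeta n.
apply: (split_epi_radical_conj (a := alpha n) (b := beta n)) => //;
  by [apply: halpha.1.1 | apply: hbeta.1.1 | apply: hf.1 | apply: hg.1
     | apply: homotopic_radical hcomm].
Qed.

Lemma irreducible_P_homotopy i0 : irreducible_C g ->
  irreducible_P (cact X i0) (cact Y i0) (f i0) ->
  irreducible_P (cact X' i0) (cact Y' i0) (g i0).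
Proof.
move=> irr [_ nsm nse _].
have Ji0 : i0 \in J by apply/negPn/negP => /(split_mono_notin f)/nsm.
apply: irreducible_C_irreducible_P => //.
  by move/split_mono_homotopy.
by move/split_epi_homotopy.
Qed.

End HomotopyEquivalentMaps.

End FalgModules.

Theorem lemma2 (k : fieldType) (A : falgType k) (HA : ~ semisimple_alg A)
  (J : pred int) (HJ : is_interval J)
  (X Y X' Y' : cplx A J) (f : cmor X Y) (g : cmor X' Y')
  (hf : chain_map f) (hg : chain_map g)
  (alpha : cmor X X') (beta : cmor Y Y')
  (halpha : iso_K alpha) (hbeta : iso_K beta)
  (hcomm : homotopic (ccomp alpha g) (ccomp f beta)) :
  (smonic f -> smonic g) /\ (sepic f -> sepic g) /\
  (irreducible_C f -> irreducible_C g -> sirreducible f -> sirreducible g).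
Proof.
have smono n := split_mono_homotopy hf hg halpha hbeta hcomm n.
have sepi n := split_epi_homotopy hf hg halpha hbeta hcomm n.
split; first by move=> sf n; apply/smono.
split; first by move=> sf n; apply/sepi.
move=> _ irr [i0 [irr_f lt_epi gt_mono]]; exists i0; split.
- move=> n; split=> [[_ nsm nse _] | ->].
    by case: (ltgtP n i0) => // [/lt_epi/sepi/nse | /gt_mono/smono/nsm].
  exact/(irreducible_P_homotopy hf hg halpha hbeta hcomm irr)/irr_f.
- by move=> n /lt_epi/sepi.
- by move=> n /gt_mono/smono.
Qed.
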